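(* Let $x\in(0,1)$ be irrational with regular continued fraction $x=[0;d_1,d_2,\dots]$, and let $\tau=G^2(x)=[0;d_3,d_4,\dots]$. Then: (i) if $d_1$ is odd and $\tau\in[\frac12,1)$, the OOCF expansion of $x$ begins with $(2,-1)$ repeated $\frac{d_1-1}{2}$ times followed by $(d_2+1,1)$, and $T^{\frac{d_1-1}{2}+1}(x)=F(\tau)$; (ii) if $d_1$ is odd and $\tau\in[0,\frac12)$, the OOCF expansion of $x$ begins with $(2,-1)$ repeated $\frac{d_1-1}{2}$ times followed by $(d_2+2,-1)$, and $T^{\frac{d_1-1}{2}+1}(x)=F(\tau)$; (iii) if $d_1$ is even, the OOCF expansion of $x$ begins with $(2,-1)$ repeated $\frac{d_1}{2}-1$ times followed by $(1,1)$, and $T^{\frac{d_1}{2}}(x)=G(x)$.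
   Context: $[0;d_1,d_2,\dots]=\cfrac{1}{d_1+\cfrac{1}{d_2+\cdots}}$ is the regular continued fraction. Gauss map $G(x)=\{1/x\}$ (fractional part) for $x\in(0,1]$, $G(0)=0$. Farey map $F(x)=\frac{x}{1-x}$ for $0\le x\le\frac12$, $F(x)=\frac{1-x}{x}$ for $\frac12\le x\le1$. OOCF: digits $D=\{(1,1)\}\cup\{(a,\varepsilon):a\ge2,\ \varepsilon=\pm1\}$; $B(k+1,-1)=[\frac{k-1}{k},\frac{2k-1}{2k+1}]$, $B(k,1)=[\frac{2k-1}{2k+1},\frac{k}{k+1}]$ ($k\ge1$); the OOCF map is $T(x)=\frac{kx-(k-1)}{k-(k+1)x}$ on $B(k+1,-1)$, $T(x)=\frac{k-(k+1)x}{kx-(k-1)}$ on $B(k,1)$, $T(1)=1$. The OOCF expansion of irrational $x\in(0,1)$ is the unique sequence $(a_n,\varepsilon_n)\in D$ with $T^{n-1}(x)\in B(a_n,\varepsilon_n)$ for all $n\ge1$. *)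

From Stdlib Require Import Reals Lra Lia ZArith Arith.
Open Scope R_scope.

Definition irrational (x : R) : Prop :=
  ~ exists (p q : Z), q <> 0%Z /\ x = IZR p / IZR q.

Definition gauss (x : R) : R :=
  if Req_EM_T x 0 then 0 else frac_part (/ x).

(* n-th regular continued fraction digit (n >= 1):
   d_n = floor (1 / G^(n-1)(x)), so that x = [0; d_1, d_2, ...]. *)
Definition cf_digit (x : R) (n : nat) : nat :=
  Z.to_nat (Int_part (/ Nat.iter (n - 1) gauss x)).

Definition farey (x : R) : R :=
  if Rle_dec x (1/2) then x / (1 - x) else (1 - x) / x.

(* OOCF digit set D = {(1,1)} U {(a,eps) : a >= 2, eps = +-1} and
   cylinder intervals B(a,eps):
     B(k+1,-1) = [(k-1)/k, (2k-1)/(2k+1)],  B(k,1) = [(2k-1)/(2k+1), k/(k+1)]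
   for k >= 1. *)
Definition in_B (a : nat) (eps : Z) (y : R) : Prop :=
  (eps = (-1)%Z /\ (2 <= a)%nat /\
     let k := INR (a - 1) in (k - 1) / k <= y <= (2 * k - 1) / (2 * k + 1))
  \/
  (eps = 1%Z /\ (1 <= a)%nat /\
     let k := INR a in (2 * k - 1) / (2 * k + 1) <= y <= k / (k + 1)).

Definition in_D (d : nat * Z) : Prop :=
  (fst d = 1%nat /\ snd d = 1%Z) \/
  ((2 <= fst d)%nat /\ (snd d = 1%Z \/ snd d = (-1)%Z)).

(* For y in [0,1), k = floor(1/(1-y)) is the unique
   k >= 1 with y in [(k-1)/k, k/(k+1)) = B(k+1,-1) U B(k,1) (minus the right
   end point).  The two branch formulas agree at common end points. T(1)=1. *)
Definition oocf_T (y : R) : R :=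
  if Rle_dec 1 y then 1 else
  let k := IZR (Int_part (/ (1 - y))) in
  if Rle_dec y ((2 * k - 1) / (2 * k + 1))
  then (k * y - (k - 1)) / (k - (k + 1) * y)
  else (k - (k + 1) * y) / (k * y - (k - 1)).

(* s is the OOCF expansion of x.  Indexing is 0-based: s n is the (n+1)-th
   digit (a_{n+1}, eps_{n+1}), characterised by T^n(x) in B(s n). *)
Definition is_oocf_expansion (x : R) (s : nat -> nat * Z) : Prop :=
  forall n : nat, in_D (s n) /\ in_B (fst (s n)) (snd (s n)) (Nat.iter n oocf_T x).

(** The OOCF map is conjugate, via [w = 1 / (1 - y)], to a shift on [w]:
    [y] lies in [B(k+1,-1)] iff [w] lies in [[k, k+1/2]], in [B(k,1)] iff
    [w] lies in [[k+1/2, k+1]], and on these pieces [T] becomes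
    [(w-k)/(k+1-w)] and its inverse.  For [y = 1/c] with [c > 3] this gives
    the digit [(2,-1)] and [T(1/c) = 1/(c-2)], so the first iterates of [x]
    peel off [2] from [1/x = d_1 + G(x)] at a time.  What remains is
    [1/(1 + G(x))] when [d_1] is odd, with [w = 1 + d_2 + tau], and
    [1/(2 + G(x))] when [d_1] is even, with [w] in [(3/2, 2)]; the side of
    [1/2] on which [tau] falls selects the last digit, and one more step of
    [T] yields [F(tau)], resp. [G(x)].  Irrationality keeps every point off
    the cylinder end points, which makes the digits unique. *)

From Stdlib Require Import Reals ZArith Arith Lra Lia Psatz.
Open Scope R_scope.

Lemma INR_close_eq (p q : nat) : INR p < INR q + 1 -> INR q < INR p + 1 -> p = q.
Proof.
  intros Hpq Hqp. destruct (lt_eq_lt_dec p q) as [[Hlt | ->] | Hlt]; [| reflexivity |];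
    apply le_INR in Hlt; rewrite S_INR in Hlt; lra.
Qed.

Lemma INR_ge1 (n : nat) : (1 <= n)%nat -> 1 <= INR n.
Proof. intros Hn. apply (le_INR 1 n Hn). Qed.

Lemma Rdiv_le_Rdiv_iff a b c d : 0 < b -> 0 < d -> (a / b <= c / d <-> a * d <= c * b).
Proof.
  intros Hb Hd.
  assert (E : a * d - c * b = (a / b - c / d) * (b * d)) by (field; lra).
  assert (Hbd : 0 < b * d) by nra.
  split; intro H; [nra |].
  apply Rnot_lt_le; intro H'. nra.
Qed.

Lemma irrational_neq_ratio x p q : irrational x -> q <> 0%Z -> x <> IZR p / IZR q.
Proof. intros Hx Hq E. apply Hx. exists p, q. auto. Qed.

Lemma irrational_inv x : irrational x -> irrational (/ x).
Proof.
  intros Hx [p [q [Hq E]]].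
  assert (Hx0 : x <> 0).
  { intros ->. apply (irrational_neq_ratio 0 0 1 Hx); [lia | simpl; field]. }
  assert (Hp : p <> 0%Z).
  { intros ->. apply (Rinv_neq_0_compat x Hx0). rewrite E. unfold Rdiv. ring. }
  apply (irrational_neq_ratio x q p Hx Hp).
  rewrite <- (Rinv_inv x), E. field. split; apply not_0_IZR; assumption.
Qed.

Lemma irrational_sub_INR x n : irrational x -> irrational (x - INR n).
Proof.
  intros Hx [p [q [Hq E]]].
  apply (irrational_neq_ratio x (p + Z.of_nat n * q) q Hx Hq).
  rewrite plus_IZR, mult_IZR, <- INR_IZR_INZ.
  assert (IZR q <> 0) by (apply not_0_IZR; assumption).
  replace x with (x - INR n + INR n) by ring. rewrite E. field. assumption.
Qed.

Lemma gauss_spec x : 0 < x < 1 -> irrational x ->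
  (1 <= cf_digit x 1)%nat /\ / x = INR (cf_digit x 1) + gauss x /\
  0 < gauss x < 1 /\ irrational (gauss x).
Proof.
  intros Hx Hirr.
  assert (Hinv : 1 < / x) by (rewrite <- Rinv_1; apply Rinv_lt_contravar; lra).
  destruct (base_Int_part (/ x)) as [Hfl Hfl'].
  assert (Hnn : (0 <= Int_part (/ x))%Z) by (apply le_IZR; lra).
  assert (Hd : INR (cf_digit x 1) = IZR (Int_part (/ x)))
    by (unfold cf_digit; simpl; rewrite INR_IZR_INZ, Z2Nat.id; auto).
  assert (Hg : gauss x = / x - INR (cf_digit x 1)).
  { unfold gauss. destruct (Req_EM_T x 0); [lra |]. rewrite Hd. reflexivity. }
  assert (Hirrg : irrational (gauss x))
    by (rewrite Hg; apply irrational_sub_INR, irrational_inv; assumption).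
  assert (Hg0 : gauss x <> 0)
    by (intro E; apply (irrational_neq_ratio _ 0 1 Hirrg); [lia | rewrite E; simpl; field]).
  assert (Hd1 : (1 <= cf_digit x 1)%nat).
  { destruct (cf_digit x 1) eqn:E; [| lia]. simpl in Hd. lra. }
  repeat split; auto; lra.
Qed.

Lemma in_B_iff a e w : 1 < w ->
  in_B a e ((w - 1) / w) <->
  (e = (-1)%Z /\ (2 <= a)%nat /\ INR (a - 1) <= w <= INR (a - 1) + 1/2) \/
  (e = 1%Z /\ (1 <= a)%nat /\ INR a + 1/2 <= w <= INR a + 1).
Proof.
  intros Hw. unfold in_B. cbv zeta.
  split; intros [(He & Ha & H1 & H2) | (He & Ha & H1 & H2)].
  - left. pose proof (INR_ge1 (a - 1) ltac:(lia)).
    rewrite Rdiv_le_Rdiv_iff in H1, H2 by lra. repeat split; auto; nra.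
  - right. pose proof (INR_ge1 a Ha).
    rewrite Rdiv_le_Rdiv_iff in H1, H2 by lra. repeat split; auto; nra.
  - left. pose proof (INR_ge1 (a - 1) ltac:(lia)).
    repeat split; auto; rewrite Rdiv_le_Rdiv_iff by lra; nra.
  - right. pose proof (INR_ge1 a Ha).
    repeat split; auto; rewrite Rdiv_le_Rdiv_iff by lra; nra.
Qed.

Lemma oocf_T_shift (k : nat) w : (1 <= k)%nat -> INR k <= w < INR k + 1 ->
  oocf_T ((w - 1) / w) =
  if Rle_dec w (INR k + 1/2) then (w - INR k) / (INR k + 1 - w)
  else (INR k + 1 - w) / (w - INR k).
Proof.
  intros Hk [H1 H2]. pose proof (INR_ge1 k Hk).
  unfold oocf_T.
  destruct (Rle_dec 1 ((w - 1) / w)) as [Hy | _].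
  { replace ((w - 1) / w) with (1 - / w) in Hy by (field; lra).
    pose proof (Rinv_0_lt_compat w ltac:(lra)). lra. }
  replace (/ (1 - (w - 1) / w)) with w by (field; lra).
  rewrite <- (Int_part_spec w (Z.of_nat k)) by (rewrite <- INR_IZR_INZ; lra).
  rewrite <- INR_IZR_INZ.
  destruct (Rle_dec w (INR k + 1/2)) as [Hb | Hb];
    destruct (Rle_dec ((w - 1) / w) ((2 * INR k - 1) / (2 * INR k + 1))) as [Hc | Hc].
  - field; split; lra.
  - exfalso; apply Hc. rewrite Rdiv_le_Rdiv_iff by lra. nra.
  - exfalso. rewrite Rdiv_le_Rdiv_iff in Hc by lra. nra.
  - field; split; lra.
Qed.

Lemma cylinder_minus (k : nat) w : (1 <= k)%nat -> INR k < w < INR k + 1/2 ->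
  (forall a e, in_B a e ((w - 1) / w) <-> (a, e) = (S k, (-1)%Z)) /\
  oocf_T ((w - 1) / w) = (w - INR k) / (INR k + 1 - w).
Proof.
  intros Hk Hw. pose proof (INR_ge1 k Hk). split.
  - intros a e. rewrite in_B_iff by lra. split.
    + intros [(-> & Ha & H1 & H2) | (-> & Ha & H1 & H2)].
      * f_equal. enough (a - 1 = k)%nat by lia. apply INR_close_eq; lra.
      * exfalso. assert (a = k) by (apply INR_close_eq; lra). subst. lra.
    + intros [= -> ->]. left. replace (S k - 1)%nat with k by lia.
      repeat split; auto; lia || lra.
  - rewrite oocf_T_shift with (k := k) by (auto; lra).
    destruct (Rle_dec w (INR k + 1/2)); [reflexivity | lra].
Qed.

Lemma cylinder_plus (k : nat) w : (1 <= k)%nat -> INR k + 1/2 < w < INR k + 1 ->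
  (forall a e, in_B a e ((w - 1) / w) <-> (a, e) = (k, 1%Z)) /\
  oocf_T ((w - 1) / w) = (INR k + 1 - w) / (w - INR k).
Proof.
  intros Hk Hw. pose proof (INR_ge1 k Hk). split.
  - intros a e. rewrite in_B_iff by lra. split.
    + intros [(-> & Ha & H1 & H2) | (-> & Ha & H1 & H2)].
      * exfalso. assert (Ha' : (a - 1 = k)%nat) by (apply INR_close_eq; lra).
        rewrite Ha' in H2. lra.
      * f_equal. apply INR_close_eq; lra.
    + intros [= -> ->]. right. repeat split; auto; lra.
  - rewrite oocf_T_shift with (k := k) by (auto; lra).
    destruct (Rle_dec w (INR k + 1/2)); [lra | reflexivity].
Qed.

Lemma oocf_T_inv c : 3 < c ->
  (forall a e, in_B a e (/ c) <-> (a, e) = (2%nat, (-1)%Z)) /\ oocf_T (/ c) = / (c - 2).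
Proof.
  intros Hc.
  replace (/ c) with ((c / (c - 1) - 1) / (c / (c - 1))) by (field; lra).
  destruct (cylinder_minus 1 (c / (c - 1)) (le_n 1)) as [HB HT].
  { simpl. split; apply Rmult_lt_reg_r with (c - 1); try lra; field_simplify; lra. }
  split; [exact HB |]. rewrite HT. simpl. field. lra.
Qed.

Lemma oocf_iter_inv x (m : nat) : 0 < x -> 2 * INR m + 1 < / x ->
  (forall i, (i < m)%nat ->
     forall a e, in_B a e (Nat.iter i oocf_T x) <-> (a, e) = (2%nat, (-1)%Z)) /\
  Nat.iter m oocf_T x = / (/ x - 2 * INR m).
Proof.
  intros Hx. induction m as [| m IH]; intros Hm.
  - split; [intros i Hi; lia |]. simpl. rewrite Rmult_0_r, Rminus_0_r, Rinv_inv. reflexivity.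
  - rewrite S_INR in Hm. destruct IH as [Hpre Hit]; [lra |].
    destruct (oocf_T_inv (/ x - 2 * INR m)) as [HB HT]; [lra |]. split.
    + intros i Hi. destruct (Nat.eq_dec i m) as [-> | Hne].
      * rewrite Hit. exact HB.
      * apply Hpre. lia.
    + simpl Nat.iter. rewrite Hit, HT, S_INR. f_equal. ring.
Qed.

Lemma oocf_last_high (n : nat) tau : 1/2 < tau < 1 ->
  (forall a e, in_B a e (/ (1 + / (INR n + tau))) <-> (a, e) = ((n + 1)%nat, 1%Z)) /\
  oocf_T (/ (1 + / (INR n + tau))) = farey tau.
Proof.
  intros Htau. pose proof (pos_INR n).
  replace (/ (1 + / (INR n + tau))) with ((INR (n + 1) + tau - 1) / (INR (n + 1) + tau))
    by (rewrite plus_INR; simpl; field; lra).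
  destruct (cylinder_plus (n + 1) (INR (n + 1) + tau)) as [HB HT];
    [lia | rewrite plus_INR; simpl; lra |].
  split; [exact HB |]. rewrite HT.
  unfold farey. destruct (Rle_dec tau (1/2)); [lra |]. field. lra.
Qed.

Lemma oocf_last_low (n : nat) tau : 0 < tau < 1/2 ->
  (forall a e, in_B a e (/ (1 + / (INR n + tau))) <-> (a, e) = ((n + 2)%nat, (-1)%Z)) /\
  oocf_T (/ (1 + / (INR n + tau))) = farey tau.
Proof.
  intros Htau. pose proof (pos_INR n).
  replace (/ (1 + / (INR n + tau))) with ((INR (n + 1) + tau - 1) / (INR (n + 1) + tau))
    by (rewrite plus_INR; simpl; field; lra).
  destruct (cylinder_minus (n + 1) (INR (n + 1) + tau)) as [HB HT];
    [lia | rewrite plus_INR; simpl; lra |].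
  replace (S (n + 1)) with (n + 2)%nat in HB by lia.
  split; [exact HB |]. rewrite HT.
  unfold farey. destruct (Rle_dec tau (1/2)); [| lra]. field. lra.
Qed.

Lemma oocf_last_even f : 0 < f < 1 ->
  (forall a e, in_B a e (/ (2 + f)) <-> (a, e) = (1%nat, 1%Z)) /\ oocf_T (/ (2 + f)) = f.
Proof.
  intros Hf.
  replace (/ (2 + f)) with (((2 + f) / (1 + f) - 1) / ((2 + f) / (1 + f))) by (field; lra).
  destruct (cylinder_plus 1 ((2 + f) / (1 + f)) (le_n 1)) as [HB HT].
  { simpl. split; apply Rmult_lt_reg_r with (1 + f); try lra; field_simplify; lra. }
  split; [exact HB |]. rewrite HT. simpl. field. lra.
Qed.

Lemma oocf_expansion_start x (m : nat) r a e v : 0 < x -> 1 < r -> / x = 2 * INR m + r ->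
  (forall a' e', in_B a' e' (/ r) <-> (a', e') = (a, e)) /\ oocf_T (/ r) = v ->
  (forall i, (i < m)%nat -> in_B 2 (-1) (Nat.iter i oocf_T x)) /\
  in_B a e (Nat.iter m oocf_T x) /\
  (forall s, is_oocf_expansion x s ->
     (forall i, (i < m)%nat -> s i = (2%nat, (-1)%Z)) /\ s m = (a, e)) /\
  Nat.iter (m + 1) oocf_T x = v.
Proof.
  intros Hx Hr Hxr [Hlast HT].
  destruct (oocf_iter_inv x m Hx ltac:(lra)) as [Hpre Hit].
  replace (/ x - 2 * INR m) with r in Hit by lra. rewrite Hit.
  assert (Hdigit : forall s n d, is_oocf_expansion x s ->
            (forall a' e', in_B a' e' (Nat.iter n oocf_T x) <-> (a', e') = d) -> s n = d).
  { intros s n d Hs Hd. destruct (Hs n) as [_ HB]. destruct (s n) as [a' e'].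
    apply Hd, HB. }
  split; [| split; [| split]].
  - intros i Hi. apply (Hpre i Hi). reflexivity.
  - apply Hlast. reflexivity.
  - intros s Hs. split; [intros i Hi |]; apply (Hdigit s _ _ Hs).
    + apply Hpre, Hi.
    + rewrite Hit. exact Hlast.
  - rewrite Nat.add_1_r. simpl. rewrite Hit. exact HT.
Qed.

Theorem theorem5p3 (x : R) (hx0 : 0 < x) (hx1 : x < 1) (hirr : irrational x) :
  let d1 := cf_digit x 1 in
  let d2 := cf_digit x 2 in
  let tau := Nat.iter 2 gauss x in
  (* (i) *)
  (Nat.odd d1 = true -> 1/2 <= tau < 1 ->
     let m := ((d1 - 1) / 2)%nat in
     (forall i : nat, (i < m)%nat -> in_B 2 (-1) (Nat.iter i oocf_T x)) /\
     in_B (d2 + 1) 1 (Nat.iter m oocf_T x) /\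
     (forall s, is_oocf_expansion x s ->
        (forall i : nat, (i < m)%nat -> s i = (2%nat, (-1)%Z)) /\
        s m = ((d2 + 1)%nat, 1%Z)) /\
     Nat.iter (m + 1) oocf_T x = farey tau) /\
  (* (ii) *)
  (Nat.odd d1 = true -> 0 <= tau < 1/2 ->
     let m := ((d1 - 1) / 2)%nat in
     (forall i : nat, (i < m)%nat -> in_B 2 (-1) (Nat.iter i oocf_T x)) /\
     in_B (d2 + 2) (-1) (Nat.iter m oocf_T x) /\
     (forall s, is_oocf_expansion x s ->
        (forall i : nat, (i < m)%nat -> s i = (2%nat, (-1)%Z)) /\
        s m = ((d2 + 2)%nat, (-1)%Z)) /\
     Nat.iter (m + 1) oocf_T x = farey tau) /\
  (* (iii) *)
  (Nat.even d1 = true ->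
     let m := (d1 / 2 - 1)%nat in
     (forall i : nat, (i < m)%nat -> in_B 2 (-1) (Nat.iter i oocf_T x)) /\
     in_B 1 1 (Nat.iter m oocf_T x) /\
     (forall s, is_oocf_expansion x s ->
        (forall i : nat, (i < m)%nat -> s i = (2%nat, (-1)%Z)) /\
        s m = (1%nat, 1%Z)) /\
     Nat.iter (d1 / 2) oocf_T x = gauss x).
Proof.
  intros d1 d2 tau.
  destruct (gauss_spec x (conj hx0 hx1) hirr) as (Hd1 & Hx & Hf & Hirrf).
  change (cf_digit x 1) with d1 in Hd1, Hx.
  destruct (gauss_spec (gauss x) Hf Hirrf) as (_ & Hd2 & Htau & Hirrtau).
  change (cf_digit (gauss x) 1) with d2 in Hd2. change (gauss (gauss x)) with tau in *.
  assert (Hhalf : tau <> 1/2) by (apply (irrational_neq_ratio tau 1 2); [assumption | lia]).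
  assert (Hg : gauss x = / (INR d2 + tau)) by (rewrite <- Hd2, Rinv_inv; reflexivity).
  split; [| split].
  - intros Hodd Ht. destruct (proj1 (Nat.odd_spec d1) Hodd) as [m Hm]. cbv zeta.
    replace ((d1 - 1) / 2)%nat with m by (rewrite Hm, Nat.add_sub, Nat.mul_comm, Nat.div_mul; lia).
    apply (oocf_expansion_start x m (1 + gauss x)); [lra | lra | |].
    + rewrite Hx, Hm, plus_INR, mult_INR. simpl. ring.
    + rewrite Hg. apply oocf_last_high. lra.
  - intros Hodd Ht. destruct (proj1 (Nat.odd_spec d1) Hodd) as [m Hm]. cbv zeta.
    replace ((d1 - 1) / 2)%nat with m by (rewrite Hm, Nat.add_sub, Nat.mul_comm, Nat.div_mul; lia).
    apply (oocf_expansion_start x m (1 + gauss x)); [lra | lra | |].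
    + rewrite Hx, Hm, plus_INR, mult_INR. simpl. ring.
    + rewrite Hg. apply oocf_last_low. lra.
  - intros Heven. destruct (proj1 (Nat.even_spec d1) Heven) as [k Hk]. cbv zeta.
    replace (d1 / 2)%nat with (k - 1 + 1)%nat by (rewrite Hk, Nat.mul_comm, Nat.div_mul; lia).
    rewrite Nat.add_sub.
    apply (oocf_expansion_start x (k - 1) (2 + gauss x)); [lra | lra | |].
    + rewrite Hx, Hk, minus_INR, mult_INR by lia. simpl. ring.
    + apply oocf_last_even. exact Hf.
Qed.
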